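(* Online gradient descent with a fixed restart schedule (as defined in the context) is a linear forecaster. Consequently, for fixed constants $C>0$, $U>0$, $\sigma>0$, its worst-case expected cumulative squared error $\sup_{\theta_{1:n}}\mathbb{E}\big[\sum_{t=1}^n(x_t-\theta_t)^2\big]$, the supremum being over $\theta_{1:n}\in\mathrm{TV}(C)$ with $|\theta_1|\le U$, is at least $\tilde\Omega(\sqrt n)$ as $n\to\infty$, whatever the restart schedule and step sizes.
   Context: Setting: $y_t=\theta_t+Z_t$ with $Z_1,\dots,Z_n$ independent zero-mean $\sigma$-subgaussian noise; the forecaster outputs $x_t$ based on $y_1,\dots,y_{t-1}$ only. $\mathrm{TV}(C)=\{\theta_{1:n}:\sum_{i=2}^n|\theta_i-\theta_{i-1}|\le C\}$. A linear forecaster is one whose predictions satisfy $x_t=\sum_{s<t}a_{t,s}y_s$ for a fixed, data-independent array of coefficients $a_{t,s}$. Online gradient descent (OGD) with a fixed restart schedule: the time axis $1,\dots,n$ is partitioned into consecutive blocks by a schedule fixed in advance; at the start of each block the iterate is reset to a fixed linear combination of past observations (e.g. $0$ or the previous observation), and within a block it is updated by $x_{t+1}=x_t-\eta_t\cdot 2(x_t-y_t)$ (the stochastic gradient of the loss $(x-\theta_t)^2$) with fixed, data-independent step sizes $\eta_t$. $\tilde\Omega$ hides logarithmic factors in $n$. *)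

From mathcomp Require Import all_boot all_order all_algebra.
From mathcomp Require Import all_classical all_reals all_analysis.
Set Implicit Arguments. Unset Strict Implicit. Unset Printing Implicit Defensive.
Import Order.TTheory GRing.Theory Num.Theory.
Local Open Scope classical_set_scope.
Local Open Scope ring_scope.
Local Open Scope ereal_scope.
Local Open Scope ring_scope.

(* Time is indexed 0,1,...,n-1 (paper: 1,...,n).  Observations y : nat -> R. *)

Definition is_linear_forecaster (R : realType)
    (F : (nat -> R) -> nat -> R) : Prop :=
  exists a : nat -> nat -> R, forall (y : nat -> R) (t : nat),
    F y t = \sum_(s < t) a t s * y s.

(* Online gradient descent with a fixed restart schedule.
   - [restart t] : a new block starts at time t (time 0 always starts a block);
   - [r t s]     : at a block start t, the iterate is reset to the fixed
                   linear combination sum_{s<t} r t s * y_s (at t = 0 this is 0);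
   - [eta t]     : fixed step sizes; within a block
                   x_{t+1} = x_t - eta_t * 2 (x_t - y_t). *)
Fixpoint ogd (R : realType) (restart : nat -> bool) (r : nat -> nat -> R)
    (eta : nat -> R) (y : nat -> R) (t : nat) : R :=
  match t with
  | 0 => 0
  | t'.+1 =>
      if restart t'.+1 then \sum_(s < t'.+1) r t'.+1 s * y s
      else ogd restart r eta y t' - eta t' * (2 * (ogd restart r eta y t' - y t'))
  end.

Definition TVball (R : realType) (n : nat) (C U : R) : set (nat -> R) :=
  [set theta | \sum_(1 <= i < n) `|theta i - theta i.-1| <= C /\ `|theta 0%N| <= U].

(* Mutual independence of Z_0, ..., Z_{n-1} (product rule for all measurable
   B_0,...,B_{n-1}; taking B_t = setT recovers every finite subfamily). *)
Definition mutually_independent (d : measure_display) (T : measurableType d)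
    (R : realType) (P : probability T R) (n : nat) (Z : nat -> T -> R) : Prop :=
  forall B : nat -> set R, (forall t, measurable (B t)) ->
    P (\bigcap_(t in [set t | (t < n)%N]) (Z t @^-1` B t)) =
    (\prod_(t < n) P (Z t @^-1` B t))%E.

Definition subgaussian (d : measure_display) (T : measurableType d)
    (R : realType) (P : probability T R) (sigma : R) (X : T -> R) : Prop :=
  forall l : R, ('E_P[fun w => expR (l * X w)] <= (expR (l ^+ 2 * sigma ^+ 2 / 2))%:E)%E.

Definition noise_model (d : measure_display) (T : measurableType d)
    (R : realType) (P : probability T R) (sigma : R) (n : nat)
    (Z : nat -> {RV P >-> R}) : Prop :=
  mutually_independent P n (fun t => Z t) /\
  forall t, (t < n)%N ->
    'E_P[Z t] = 0%E /\ 'V_P[Z t] = (sigma ^+ 2)%:E /\ subgaussian P sigma (Z t).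

Definition ogd_cum_err (d : measure_display) (T : measurableType d)
    (R : realType) (P : probability T R) (restart : nat -> bool)
    (r : nat -> nat -> R) (eta : nat -> R) (n : nat) (theta : nat -> R)
    (Z : nat -> {RV P >-> R}) : T -> R :=
  fun w => \sum_(t < n)
    (ogd restart r eta (fun s => theta s + Z s w) t - theta t) ^+ 2.

Arguments noise_model {d T R} P sigma n Z.
Arguments ogd_cum_err {d T R} P restart r eta n theta Z _.

From mathcomp Require Import all_boot all_order all_algebra.
From mathcomp Require Import all_classical all_reals all_analysis.
From mathcomp Require Import measurable_realfun.
From mathcomp Require Import ring lra zify.
Import Order.TTheory GRing.Theory Num.Theory.
Local Open Scope classical_set_scope.
Local Open Scope ring_scope.

(* Unrolling the OGD recursion gives x_t = sum_(s < t) a_(t,s) y_s with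
   data-independent coefficients.  For such a linear forecaster the noise is
   centred and uncorrelated, so the expected squared error at time t is
   bias_t^2 + sigma^2 W_t with W_t = sum_s a_(t,s)^2.  Cut [1, 1 + K^2), where
   K ~ sqrt n / 2, into K windows of length K; one of them carries at most 1/K
   of the total weight W = sum_t W_t.  Let theta jump from 0 to C where that
   window starts.  By Cauchy-Schwarz the coefficients on the observations made
   after the jump sum to at most sqrt (K W_t), so the squared bias over the
   window is at least K C^2 / 4 - C^2 W.  Either W >= K / 8, and the variance
   term is at least sigma^2 K / 8, or the bias term is at least C^2 K / 8. *)

Section ogd_linear.
Context {R : realType} (restart : nat -> bool) (r : nat -> nat -> R) (eta : nat -> R).

Fixpoint ogd_coef (t : nat) : nat -> R :=
  match t with
  | 0 => fun _ => 0
  | t'.+1 => fun s =>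
      if restart t'.+1 then r t'.+1 s
      else if s == t' then 2 * eta t'
      else (1 - 2 * eta t') * ogd_coef t' s
  end.

Lemma ogdE y t : ogd restart r eta y t = \sum_(s < t) ogd_coef t s * y s.
Proof.
elim: t => [|t IH]; first by rewrite big_ord0.
rewrite /=; case: (restart t.+1) => //.
rewrite big_ord_recr /= eqxx IH.
have -> : \sum_(s < t) (if s == t :> nat then 2 * eta t
                        else (1 - 2 * eta t) * ogd_coef t s) * y s
    = (1 - 2 * eta t) * \sum_(s < t) ogd_coef t s * y s.
  by rewrite mulr_sumr; apply: eq_bigr => s _; rewrite (ltn_eqF (ltn_ord s)) mulrA.
ring.
Qed.

Lemma ogd_is_linear_forecaster : is_linear_forecaster (ogd restart r eta).
Proof. by exists ogd_coef => y t; exact: ogdE. Qed.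

End ogd_linear.

Section nat_sums.
Context {R : realFieldType}.

Lemma sqr_sum_le (b : nat -> R) m t :
  (\sum_(m <= s < t) b s) ^+ 2 <= (t - m)%:R * \sum_(m <= s < t) b s ^+ 2.
Proof.
set S := \sum_(m <= s < t) b s; set Q := \sum_(m <= s < t) b s ^+ 2.
(* Lagrange: the double sum of (b s - b u)^2 equals 2 ((t - m) Q - S^2). *)
have inner s :
    \sum_(m <= u < t) (b s - b u) ^+ 2 = (t - m)%:R * b s ^+ 2 - 2 * b s * S + Q.
  under eq_bigr do rewrite sqrrB.
  rewrite big_split sumrB /= sumr_const_nat mulr_natl mulr_sumr.
  by under [X in _ - X + _ = _]eq_bigr do rewrite -mulr_natl mulrA.
have : 0 <= \sum_(m <= s < t) \sum_(m <= u < t) (b s - b u) ^+ 2.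
  by apply: sumr_ge0 => s _; apply: sumr_ge0 => u _; exact: sqr_ge0.
under eq_bigr do rewrite inner.
rewrite big_split sumrB /= sumr_const_nat -mulr_sumr -mulr_suml -mulr_sumr.
rewrite -/S -/Q expr2 mulr_natl; lra.
Qed.

Lemma ler_sum_subrange [F : nat -> R] [m1 m2 n1 n2 : nat] :
  (forall t, 0 <= F t) -> (n1 <= m1)%N -> (m2 <= n2)%N ->
  \sum_(m1 <= t < m2) F t <= \sum_(n1 <= t < n2) F t.
Proof.
move=> F0 nm1 mn2; have [m21|m12] := ltnP m2 m1.
  by rewrite big_geq ?sumr_ge0 // ltnW.
rewrite (@big_cat_nat _ _ _ m1 n1 n2 _ _ nm1 (leq_trans m12 mn2)) /=.
rewrite (@big_cat_nat _ _ _ m2 m1 n2 _ _ m12 mn2) /=.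
by rewrite addrCA lerDl addr_ge0 // sumr_ge0.
Qed.

Lemma sum_windows (V : nat -> R) p L K :
  \sum_(j < K) \sum_(p + j * L <= t < p + j.+1 * L) V t =
  \sum_(p <= t < p + K * L) V t.
Proof.
elim: K => [|K IH]; first by rewrite big_ord0 mul0n addn0 big_geq.
rewrite big_ord_recr /= IH -big_cat_nat ?leq_addr //.
by rewrite leq_add2l leq_mul2r leqnSn orbT.
Qed.

Lemma exists_le_mean (F : nat -> R) [K : nat] : (0 < K)%N ->
  exists2 j, (j < K)%N & F j <= (\sum_(i < K) F i) / K%:R.
Proof.
move=> K0; set M := (\sum_(i < K) F i) / K%:R.
have [j Fj|above] := pickP (fun j : 'I_K => F j <= M); first by exists j.
suff : \sum_(i < K) M < \sum_(i < K) F i.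
  by rewrite sumr_const card_ord -mulr_natr divfK ?ltxx // pnatr_eq0 -lt0n.
apply: ltr_sum => [|i _]; last by rewrite ltNge above.
by apply/hasP; exists (Ordinal K0); rewrite ?mem_index_enum.
Qed.

End nat_sums.

Section linear_risk_lower_bound.
Context {R : realFieldType}.

Definition jump (C : R) (m : nat) : nat -> R := fun s => if (m <= s)%N then C else 0.

Definition forecast_bias (a : nat -> nat -> R) (theta : nat -> R) t :=
  \sum_(s < t) a t s * theta s - theta t.

Definition noise_weight (a : nat -> nat -> R) t := \sum_(s < t) a t s ^+ 2.

Definition linear_risk (sig : R) (a : nat -> nat -> R) n (theta : nat -> R) :=
  \sum_(t < n) (forecast_bias a theta t ^+ 2 + sig ^+ 2 * noise_weight a t).

Lemma noise_weight_ge0 a t : 0 <= noise_weight a t.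
Proof. by apply: sumr_ge0 => s _; exact: sqr_ge0. Qed.

Lemma sqr_forecast_bias_jump_ge (a : nat -> nat -> R) C m t K :
  (m <= t)%N -> (t - m <= K)%N ->
  C ^+ 2 / 4 - C ^+ 2 * K%:R * noise_weight a t <= forecast_bias a (jump C m) t ^+ 2.
Proof.
move=> mt tmK; set S := \sum_(m <= s < t) a t s.
have forecastE : \sum_(s < t) a t s * jump C m s = C * S.
  rewrite -(big_mkord xpredT (fun s => a t s * jump C m s)).
  rewrite (@big_cat_nat _ _ _ m 0 t _ _ (leq0n m) mt) /=.
  rewrite big_nat_cond big1 ?add0r => [|s /andP[/andP[_ sm] _]].
    by rewrite mulr_sumr; apply: eq_big_nat => s /andP[ms _]; rewrite /jump ms mulrC.
  by rewrite /jump leqNgt sm mulr0.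
have S2 : S ^+ 2 <= K%:R * noise_weight a t.
  apply: le_trans (sqr_sum_le _ m t) _; apply: ler_pM.
  - exact: ler0n.
  - by apply: sumr_ge0 => s _; exact: sqr_ge0.
  - by rewrite ler_nat.
  rewrite /noise_weight -(big_mkord xpredT (fun s => a t s ^+ 2)).
  exact: ler_sum_subrange (fun s => sqr_ge0 _) (leq0n m) (leqnn t).
rewrite /forecast_bias forecastE /jump mt.
(* (C S - C)^2 = C^2 (S - 1)^2 and (S - 1)^2 >= 1/4 - S^2. *)
have := ler_wpM2l (sqr_ge0 C) S2.
have := mulr_ge0 (sqr_ge0 C) (sqr_ge0 (2 * S - 1)).
nra.
Qed.

Lemma min_sqr_le_bias_variance [sig C B X k : R] :
  0 <= B -> 0 <= X -> 0 <= k -> C ^+ 2 * k / 4 - C ^+ 2 * X <= B ->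
  Num.min (sig ^+ 2) (C ^+ 2) * k / 8 <= B + sig ^+ 2 * X.
Proof.
move=> B0 X0 k0 bias_ge; have := mulr_ge0 (sqr_ge0 sig) X0.
have min_sig : Num.min (sig ^+ 2) (C ^+ 2) <= sig ^+ 2 by rewrite ge_min lexx.
have min_C : Num.min (sig ^+ 2) (C ^+ 2) <= C ^+ 2 by rewrite ge_min lexx orbT.
have min0 : 0 <= Num.min (sig ^+ 2) (C ^+ 2) by rewrite le_min !sqr_ge0.
have [Xk|Xk] := leP (k / 8) X.
  by have := ler_pM min0 (divr_ge0 k0 (ler0n _ 8)) min_sig Xk; nra.
by have := ler_wpM2r k0 min_C; have := ler_wpM2l (sqr_ge0 C) (ltW Xk); nra.
Qed.

Lemma linear_risk_ge_window (sig C : R) a [n K : nat] :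
  (0 < K)%N -> (1 + K * K <= n)%N ->
  exists2 m, (1 <= m < n)%N &
    Num.min (sig ^+ 2) (C ^+ 2) * K%:R / 8 <= linear_risk sig a n (jump C m).
Proof.
move=> K0 Kn; set X := \sum_(t < n) noise_weight a t.
have X0 : 0 <= X by apply: sumr_ge0 => t _; exact: noise_weight_ge0.
pose window j := \sum_(1 + j * K <= t < 1 + j.+1 * K) noise_weight a t.
have [j jK light] := exists_le_mean window K0.
have windows_le : \sum_(i < K) window i <= X.
  rewrite sum_windows /X -(big_mkord xpredT (noise_weight a)).
  exact: ler_sum_subrange (noise_weight_ge0 a) (leq0n 1) Kn.
set m := (1 + j * K)%N.
have mK : (m + K = 1 + j.+1 * K)%N by rewrite /m mulSn; lia.
have mKn : (m + K <= n)%N.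
  by rewrite mK (leq_trans _ Kn) // leq_add2l leq_mul2r jK orbT.
exists m.
  by rewrite leq_addr /= (leq_trans _ mKn) // -[X in (X < _)%N]addn0 ltn_add2l.
have Kwin : K%:R * \sum_(m <= t < m + K) noise_weight a t <= X.
  by apply: le_trans _ windows_le; rewrite mK mulrC -ler_pdivlMr ?ltr0n.
have bias_ge : C ^+ 2 * K%:R / 4 - C ^+ 2 * X <=
    \sum_(t < n) forecast_bias a (jump C m) t ^+ 2.
  rewrite -(big_mkord xpredT (fun t => forecast_bias a (jump C m) t ^+ 2)).
  apply: le_trans _ (ler_sum_subrange (fun t => sqr_ge0 _) (leq0n m) mKn).
  pose lb t := C ^+ 2 / 4 - C ^+ 2 * K%:R * noise_weight a t.
  apply: le_trans _ (ler_sum_nat (F := lb) _); last first.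
    by move=> t /andP[mt tmK]; apply: sqr_forecast_bias_jump_ge => //; lia.
  rewrite sumrB sumr_const_nat addKn -mulr_sumr -mulrA.
  have := ler_wpM2l (sqr_ge0 C) Kwin; lra.
rewrite /linear_risk big_split /= -mulr_sumr -/X.
apply: min_sqr_le_bias_variance X0 (ler0n _ K) bias_ge.
by apply: sumr_ge0 => t _; exact: sqr_ge0.
Qed.

End linear_risk_lower_bound.

Lemma linear_risk_ge_sqrt {R : realType} (sig C : R) a [n : nat] : (16 <= n)%N ->
  exists2 m, (1 <= m < n)%N &
    Num.min (sig ^+ 2) (C ^+ 2) * Num.sqrt n%:R / 32 <= linear_risk sig a n (jump C m).
Proof.
move=> n16; set s := Num.sqrt n%:R.
have s0 : 0 <= s := sqrtr_ge0 _.
have ss : s ^+ 2 = n%:R by rewrite sqr_sqrtr // ler0n.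
have s4 : 4 <= s.
  rewrite -(@ler_pXn2r _ 2) ?nnegrE // ss.
  by rewrite (_ : 4 ^+ 2 = 16%:R) ?ler_nat //; lra.
set K := Num.truncn (s / 2).
have /andP[Ks Ks'] := truncn_itv (divr_ge0 s0 (ler0n R 2)); rewrite -/K in Ks Ks'.
have K4 : s / 4 <= K%:R by move: Ks'; rewrite -[K.+1]addn1 natrD; lra.
have K0 : (0 < K)%N by rewrite -(ltr0n R); lra.
have Kn : (1 + K * K <= n)%N.
  rewrite -(ler_nat R) natrD natrM -ss.
  by have := ler_pM (ler0n R K) (ler0n R K) Ks Ks; nra.
have [m mn risk_ge] := linear_risk_ge_window sig C a K0 Kn.
exists m => //; apply: le_trans risk_ge.
have min0 : 0 <= Num.min (sig ^+ 2) (C ^+ 2) by rewrite le_min !sqr_ge0.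
by have := ler_wpM2l min0 K4; lra.
Qed.

Lemma jump_in_TVball {R : realType} (C U : R) m n :
  0 <= C -> 0 <= U -> (1 <= m < n)%N -> TVball n C U (jump C m).
Proof.
move=> C0 U0 /andP[m1 mn]; split; last by rewrite /jump leqNgt m1 normr0.
rewrite (bigD1_seq m) ?mem_index_iota ?m1 ?iota_uniq //= big1_seq ?addr0.
  by rewrite /jump leqnn leqNgt prednK ?leqnn // subr0 ger0_norm.
move=> i /andP[im]; rewrite mem_index_iota /jump => /andP[i1 _].
have -> : (m <= i.-1)%N = (m <= i)%N by apply/idP/idP; move: im => /eqP; lia.
by rewrite subrr normr0.
Qed.

Section centered_product.
Context (R : realType) (mu nu : probability R R).
Local Open Scope ereal_scope.

Lemma integral_prod_mul_centered :
  \int[mu]_x `|x%:E| < +oo -> nu.-integrable setT EFin -> \int[nu]_y y%:E = 0 ->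
  \int[(mu \x nu)%E]_z (z.1 * z.2)%R%:E = 0.
Proof.
move=> imu inu nu0.
pose f (z : R * R) := (z.1 * z.2)%R%:E.
have mf : measurable_fun setT f by apply/measurable_EFinP; apply: measurable_funM.
have imunu : (mu \x nu)%E.-integrable setT f.
  apply/(@integrable12ltyP _ _ _ _ _ mu nu f mf).
  have inu' : \int[nu]_y `|y%:E| < +oo by case/integrableP: inu.
  have mabs : measurable_fun setT (fun x : R => `|x|%:E).
    by apply/measurable_EFinP; exact: normr_measurable.
  under eq_integral => x _.
    under eq_integral => y _ do rewrite /= normrM EFinM.
    rewrite ge0_integralZl//.
    over.
  rewrite /= ge0_integralZr ?integral_ge0//.
  by rewrite lte_mul_pinfty ?ge0_fin_numE ?integral_ge0.
change (\int[(mu \x nu)%E]_z f z = 0).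
rewrite -integral12_prod_meas1 // /fubini_F.
under eq_integral => x _.
  rewrite /= (eq_integral (fun y => x%:E * y%:E)) // integralZl // nu0 mule0.
  over.
by rewrite integral0.
Qed.

End centered_product.

Section uncorrelated_noise.
Context {d : measure_display} {T : measurableType d} {R : realType} {P : probability T R}.
Local Open Scope ereal_scope.

Lemma expectation_mul_indep_centered (X Y : {RV P >-> R}) :
  (forall A B, measurable A -> measurable B ->
     P (X @^-1` A `&` Y @^-1` B) = P (X @^-1` A) * P (Y @^-1` B)) ->
  (X : T -> R) \in Lfun P 1 -> (Y : T -> R) \in Lfun P 1 ->
  (X \* Y)%R \in Lfun P 1 -> 'E_P[Y] = 0 -> 'E_P[X \* Y]%R = 0.
Proof.
move=> XY_indep X1 Y1 XY1 EY0.
have mW : measurable_fun setT (fun w => (X w, Y w)) by exact: measurable_fun_pair.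
pose W : {mfun T >-> (R * R)%type} :=
  MeasurableFun.Pack (MeasurableFun.Class (isMeasurableFun.Build _ _ _ _ _ mW)).
have joint S : measurable S ->
    (distribution P X \x distribution P Y)%E S = distribution P W S.
  apply: product_measure_unique => A B mA mB.
  by rewrite /distribution /pushforward /= -XY_indep.
have iX : P.-integrable setT (EFin \o X) by exact/Lfun1_integrable.
have iY : P.-integrable setT (EFin \o Y) by exact/Lfun1_integrable.
have mnorm : measurable_fun setT (fun x : R => `|x%:E|) by exact: measurableT_comp.
rewrite expectation_def.
rewrite -[LHS]/(\int[P]_w ((fun z : R * R => (z.1 * z.2)%R%:E) \o W) w).
rewrite -integral_distribution; first last.
- exact/Lfun1_integrable.
- by apply/measurable_EFinP; apply: measurable_funM.
rewrite -(eq_measure_integral _ (fun A mA _ => joint A mA)).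
apply: integral_prod_mul_centered.
- by rewrite ge0_integral_distribution //; case/integrableP: iX.
- apply/integrableP; split => //.
  by rewrite ge0_integral_distribution //; case/integrableP: iY.
- by rewrite integral_distribution // -EY0 expectation_def.
Qed.

Lemma mutually_independent_pair [n : nat] [Z : nat -> T -> R] [s u : nat] :
  mutually_independent P n Z -> (s < n)%N -> (u < n)%N -> s != u ->
  forall A B, measurable A -> measurable B ->
  P (Z s @^-1` A `&` Z u @^-1` B) = P (Z s @^-1` A) * P (Z u @^-1` B).
Proof.
move=> indep sn un su A B mA mB.
pose Bf t := if t == s then A else if t == u then B else setT.
have mBf t : measurable (Bf t) by rewrite /Bf; case: ifP => _ //; case: ifP.
have := indep Bf mBf.
have -> : \bigcap_(t in [set t | (t < n)%N]) (Z t @^-1` Bf t) =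
    Z s @^-1` A `&` Z u @^-1` B.
  apply/seteqP; split => w /=.
  - move=> h; split; first by have := h s sn; rewrite /Bf eqxx.
    by have := h u un; rewrite /Bf eqxx eq_sym (negbTE su).
  - move=> [hA hB] t tn; rewrite /Bf.
    by case: eqP => [->//|_]; case: eqP => [->//|_].
move=> ->; rewrite (bigD1 (Ordinal sn)) //= (bigD1 (Ordinal un)) /=; last first.
  by rewrite -val_eqE /= eq_sym.
rewrite big1 ?mule1; first by rewrite /Bf eqxx eq_sym (negbTE su) eqxx.
move=> t /andP[ts tu]; rewrite /Bf.
rewrite -val_eqE /= in ts; rewrite -val_eqE /= in tu.
by rewrite (negbTE ts) (negbTE tu) preimage_setT probability_setT.
Qed.

Lemma centered_variance_Lfun2 [X : {RV P >-> R}] [v : R] :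
  'E_P[X] = 0 -> 'V_P[X] = v%:E ->
  (X : T -> R) \in Lfun P 2%:E /\ 'E_P[X \* X]%R = v%:E.
Proof.
move=> EX VX.
have EXX : 'E_P[X \* X]%R = v%:E.
  rewrite -VX /variance covariance.unlock EX /=.
  congr expectation; apply/funext => w /=.
  by rewrite -[RHS]/((X w - 0) * (X w - 0))%R subr0.
split => //.
rewrite inE; apply/andP; split; first by rewrite inE; exact: measurable_funP.
rewrite inE /= /finite_norm; apply: (@lty_poweRy _ _ 2%R) => //.
rewrite powR_Lnorm // [X in X < _](_ : _ = 'E_P[X \* X]%R); first by rewrite EXX ltry.
rewrite expectation_def; apply: eq_integral => w _ /=.
by rewrite powR_mulrn ?normr_ge0 // real_normK ?num_real.
Qed.

Lemma noise_model_moments [sig : R] [n : nat] [Z : nat -> {RV P >-> R}] :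
  noise_model P sig n Z ->
  [/\ forall s, (s < n)%N -> (Z s : T -> R) \in Lfun P 2%:E,
      forall s, (s < n)%N -> 'E_P[Z s] = 0 &
      forall s u, (s < n)%N -> (u < n)%N ->
        'E_P[Z s \* Z u]%R = (if s == u then sig ^+ 2 else 0)%:E].
Proof.
move=> [indep moments].
have Z2 s : (s < n)%N -> (Z s : T -> R) \in Lfun P 2%:E.
  by move=> sn; have [EZ [VZ _]] := moments s sn; case: (centered_variance_Lfun2 EZ VZ).
have EZ s : (s < n)%N -> 'E_P[Z s] = 0 by move=> sn; case: (moments s sn).
split => // s u sn un; have [<-|su] := eqVneq s u.
  by have [EZs [VZ _]] := moments s sn; case: (centered_variance_Lfun2 EZs VZ).
have Pfin : P setT \is a fin_num := fin_num_measure P _ measurableT.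
apply: expectation_mul_indep_centered; last exact: EZ.
- exact: mutually_independent_pair indep sn un su.
- exact: Lfun_subset12 (Z2 s sn).
- exact: Lfun_subset12 (Z2 u un).
- exact: Lfun2_mul_Lfun1 (Z2 s sn) (Z2 u un).
Qed.

End uncorrelated_noise.

Section linear_forecast_risk.
Context {d : measure_display} {T : measurableType d} {R : realType} {P : probability T R}.
Context {n : nat} {Z : nat -> {RV P >-> R}} {sig : R}.
Hypothesis Z2 : forall s, (s < n)%N -> (Z s : T -> R) \in Lfun P 2%:E.
Hypothesis EZ : forall s, (s < n)%N -> ('E_P[Z s] = 0)%E.
Hypothesis EZZ : forall s u, (s < n)%N -> (u < n)%N ->
  ('E_P[Z s \* Z u] = (if s == u then sig ^+ 2 else 0)%:E)%E.

Let Pfin : P setT \is a fin_num := fin_num_measure P _ measurableT.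

Let ZZ1 [s u : nat] : (s < n)%N -> (u < n)%N -> (Z s \* Z u) \in Lfun P 1.
Proof. by move=> sn un; exact: Lfun2_mul_Lfun1 (Z2 _ sn) (Z2 _ un). Qed.

Definition affine_noise (c : R) (b : nat -> R) k : T -> R :=
  fun w => c + \sum_(s < k) b s * Z s w.

Lemma affine_noiseS c b k :
  affine_noise c b k.+1 = affine_noise c b k \+ b k \o* Z k.
Proof. by apply/funext => w; rewrite /affine_noise big_ord_recr /= addrA mulrC. Qed.

Lemma affine_noise_Lfun2 c b [k] : (k <= n)%N -> affine_noise c b k \in Lfun P 2%:E.
Proof.
elim: k => [_|k IH kn].
  have -> : affine_noise c b 0 = cst c.
    by apply/funext => w; rewrite /= /affine_noise big_ord0 addr0.
  exact: Lfun_cst.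
have bZ2 : b k \o* Z k \in Lfun P 2%:E by apply: Lfun_scale; [rewrite ler1n | exact: Z2].
have G2 := IH (ltnW kn).
by rewrite affine_noiseS rpredD // ?lee1n ?ler1n.
Qed.

Lemma expectation_affine_noise_mulZ c b k u : (k <= u < n)%N ->
  ('E_P[affine_noise c b k \* Z u] = 0)%E.
Proof.
case/andP; elim: k => [_ un|k IH ku un].
  have -> : affine_noise c b 0 \* Z u = c \o* Z u.
    by apply/funext => w; rewrite /= /affine_noise big_ord0 addr0 mulrC.
  by rewrite expectationZl ?EZ ?mule0 // Lfun_subset12 ?Z2.
have kn : (k < n)%N := ltn_trans ku un.
have -> : affine_noise c b k.+1 \* Z u =
    (affine_noise c b k \* Z u) \+ b k \o* (Z k \* Z u).
  by apply/funext => w; rewrite affine_noiseS /=; ring.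
have G2 := affine_noise_Lfun2 c b (ltnW kn).
have kZu1 := ZZ1 kn un.
rewrite expectationD; last 2 first.
- exact: Lfun2_mul_Lfun1 G2 (Z2 _ un).
- by apply: Lfun_scale.
rewrite expectationZl // IH ?(ltnW ku) //.
by rewrite (EZZ _ _ kn un) ifN ?mule0 ?adde0 // ltn_eqF.
Qed.

Lemma expectation_sqr_affine_noise c b k : (k <= n)%N ->
  ('E_P[affine_noise c b k \* affine_noise c b k] =
   (c ^+ 2 + sig ^+ 2 * \sum_(s < k) b s ^+ 2)%:E)%E.
Proof.
elim: k => [_|k IH kn].
  have -> : affine_noise c b 0 \* affine_noise c b 0 = cst (c ^+ 2).
    by apply/funext => w; rewrite /= /affine_noise big_ord0 addr0 expr2.
  by rewrite expectation_cst big_ord0 mulr0 addr0.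
have G2 := affine_noise_Lfun2 c b (ltnW kn).
have -> : affine_noise c b k.+1 \* affine_noise c b k.+1 =
    (affine_noise c b k \* affine_noise c b k) \+
    (2 * b k) \o* (affine_noise c b k \* Z k) \+ (b k ^+ 2) \o* (Z k \* Z k).
  by apply/funext => w; rewrite affine_noiseS /=; ring.
have GG1 := Lfun2_mul_Lfun1 G2 G2.
have GZ1 := Lfun2_mul_Lfun1 G2 (Z2 _ kn).
have ZZk1 := ZZ1 kn kn.
rewrite !expectationD ?rpredD //; try exact: Lfun_scale.
rewrite !expectationZl // IH ?(ltnW kn) //.
rewrite expectation_affine_noise_mulZ ?leqnn // EZZ // eqxx.
by rewrite mule0 adde0 -EFinM -EFinD big_ord_recr /=; congr EFin; ring.
Qed.

Lemma expectation_linear_cum_err (a : nat -> nat -> R) (theta : nat -> R) :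
  ('E_P[fun w =>
     \sum_(t < n) (\sum_(s < t) a t s * (theta s + Z s w) - theta t) ^+ 2]%R =
   (linear_risk sig a n theta)%:E)%E.
Proof.
pose err t : T -> R :=
  fun w => (\sum_(s < t) a t s * (theta s + Z s w) - theta t) ^+ 2.
have errE t : err t = affine_noise (forecast_bias a theta t) (a t) t \*
    affine_noise (forecast_bias a theta t) (a t) t.
  apply/funext => w; rewrite /err /affine_noise /forecast_bias /= expr2.
  by under eq_bigr do rewrite mulrDr; rewrite big_split /=; ring.
have err1 (t : 'I_n) : err t \in Lfun P 1.
  have := affine_noise_Lfun2 (forecast_bias a theta t) (a t) (ltnW (ltn_ord t)).
  by move=> G2; rewrite errE Lfun2_mul_Lfun1.
have -> : (fun w => \sum_(t < n) err t w) = \sum_(t < n) err t by rewrite fct_sumE.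
rewrite -(big_map (fun t : 'I_n => err t) xpredT id) expectation_sum; last first.
  by move=> _ /mapP[t _ ->].
rewrite big_map /linear_risk -sumEFin; apply: eq_bigr => t _.
by rewrite errE expectation_sqr_affine_noise // ltnW.
Qed.

End linear_forecast_risk.

Theorem proposition1 (R : realType) (C U sigma : R) :
  0 < C -> 0 < U -> 0 < sigma ->
  (forall (restart : nat -> bool) (r : nat -> nat -> R) (eta : nat -> R),
      is_linear_forecaster (ogd restart r eta)) /\
  exists (c : R) (k N : nat), 0 < c /\
    forall n : nat, (N <= n)%N ->
    forall (restart : nat -> bool) (r : nat -> nat -> R) (eta : nat -> R)
           (d : measure_display) (T : measurableType d) (P : probability T R)
           (Z : nat -> {RV P >-> R}),
      noise_model P sigma n Z ->
      ((c * Num.sqrt n%:R / (ln n%:R) ^+ k)%:E <=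
        ereal_sup [set 'E_P[ogd_cum_err P restart r eta n theta Z]
                  | theta in TVball n C U])%E.
Proof.
move=> C0 U0 sigma0; split; first exact: ogd_is_linear_forecaster.
exists (Num.min (sigma ^+ 2) (C ^+ 2) / 32), 0%N, 16%N; split.
  by rewrite divr_gt0 // lt_min !exprn_gt0.
move=> n n16 restart r eta d T P Z noise.
have [Z2 EZ EZZ] := noise_model_moments noise.
have [m mn risk_ge] := linear_risk_ge_sqrt sigma C (ogd_coef restart r eta) n16.
apply: le_trans (ereal_sup_ubound _); last first.
  by exists (jump C m) => //; apply: jump_in_TVball; rewrite ?ltW.
have -> : ogd_cum_err P restart r eta n (jump C m) Z = fun w =>
    (\sum_(t < n) (\sum_(s < t) ogd_coef restart r eta t s *
      (jump C m s + Z s w) - jump C m t) ^+ 2)%R.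
  by apply/funext => w; apply: eq_bigr => t _; rewrite ogdE.
by rewrite (expectation_linear_cum_err Z2 EZ EZZ) lee_fin expr0 divr1 mulrAC.
Qed.
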